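(* Let $L=(T,V,E)$ be a link stream (as defined in the context) with $m=|E|>0$, let $\mathcal{C}$ be a dynamic community structure on $L$, let $\lfloor \mathcal{C} \rfloor=\{\lfloor C\rfloor\}_{C\in\mathcal{C}}$ be its trimmed version, and let $\omega>0$. Then $$Q_{\star}(L,\lfloor \mathcal{C}\rfloor,\omega)\ \ge\ Q_{\star}(L,\mathcal{C},\omega),$$ for $\star = JM$ and for $\star = MM$, where $Q_\star$ denotes Longitudinal Modularity as defined in the context.
   Context: A link stream is a triple $L=(T,V,E)$ where $T\subset\mathbb{R}$ is a finite (discrete) set of time instants, $V$ is a finite set of nodes, and $E\subseteq \{(uv,t): u,v\in V,\ t\in T\}$ is a finite set of instantaneous, undirected, unweighted interactions. Write $uv_t=1$ if $(uv,t)\in E$ and $0$ otherwise; for $T'\subseteq T$ put $L_{uv,T'}=\sum_{t\in T'} uv_t$, $L_{uv}=L_{uv,T}$, $k_u=\sum_{v\in V}L_{uv}$ (degree), and $m=\sum_{u\in V}k_u/2=|E|$. A time node is a pair $ut\in V\times T$. A dynamic community structure $\mathcal{C}$ is a collection of non-empty, pairwise disjoint communities, each community $C$ being a set of time nodes. For a community $C$ and node $u$: $T_{u\in C}=\{t\in T: ut\in C\}$; $T_C=\bigcup_{u\in V}T_{u\in C}$; $L_{uv\in C}=L_{uv,\,T_{u\in C}\cap T_{v\in C}}$. For a node $u$, $\eta_u(\mathcal{C})$ (community switch count) is the number of communities of $\mathcal{C}$ visited by $u$, minus one. Expectations: $\mathbb{E}_{JM}[L_{uv\in C}]=\frac{k_uk_v}{2m}\frac{|T_C|}{|T|}\mathbb{1}_{|T_{u\in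 C}||T_{v\in C}|>0}$, and $\mathbb{E}_{MM}[L_{uv\in C}]=\frac{k_uk_v}{2m}\frac{\sqrt{|T_{u\in C}||T_{v\in C}|}}{|T|}$. Longitudinal Modularity, for $\star\in\{JM,MM\}$: $$Q_\star(L,\mathcal{C},\omega)=\frac{1}{2m}\sum_{C\in\mathcal{C}}\sum_{(u,v)\in V^2}\big[L_{uv\in C}-\mathbb{E}_\star[L_{uv\in C}]\big]-\frac{\omega}{2m}\sum_{u\in V}\eta_u(\mathcal{C}).$$ Active time nodes: $A=\{ut\in V\times T:\exists v\in V,\ (uv,t)\in E\}$; $T_{u\in C\cap A}=\{t: ut\in C\cap A\}$. The trimmed existence time of $u$ in $C$ is $\lfloor T_{u\in C}\rfloor = T_{u\in C}\cap[\min T_{u\in C\cap A},\ \max T_{u\in C\cap A}]$ (the smallest subset of $T_{u\in C}$ containing all time instants between the first and last instant at which $u$ is active within $C$; empty if $u$ is never active within $C$). The trimmed existence time of $C$ is $\lfloor T_C\rfloor=\bigcup_u\lfloor T_{u\in C}\rfloor$, the trimmed community is $\lfloor C\rfloor=\bigcup_{u\in V}\{u\}\times\lfloor T_{u\in C}\rfloor$, and $\lfloor\mathcal{C}\rfloor=\{\lfloor C\rfloor\}_{C\in\mathcal{C}}$, with $Q_\star(L,\lfloor\mathcal{C}\rfloor,\omega)$ computed by the same formula. *)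

From HB Require Import structures.
From mathcomp Require Import all_boot all_order all_algebra.
From mathcomp Require Import reals.
Set Implicit Arguments.
Unset Strict Implicit.
Unset Printing Implicit Defensive.
Import Order.TTheory GRing.Theory Num.Theory.
Local Open Scope ring_scope.

(* A link stream L = (T, V, E): T is a finite totally ordered set of time
   instants (e.g. a finite subset of the reals), V a finite node set, and
   E t u v  <=>  (uv, t) \in E  (undirected: E t is symmetric). *)
Section LinkStream.
Variable R : realType.
Variables (d : Order.disp_t) (T : finOrderType d) (V : finType).
Variable E : T -> rel V.

Definition Lw (u v : V) (A : {set T}) : nat := \sum_(t in A) (E t u v : nat).
Definition deg (u : V) : nat := \sum_(v : V) Lw u v [set: T].
Definition mm : R := (\sum_(u : V) deg u)%:R / 2.

Definition Tin (C : {set V * T}) (u : V) : {set T} := [set t | (u, t) \in C].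
Definition TC (C : {set V * T}) : {set T} := [set t | [exists u, (u, t) \in C]].
Definition Lin (C : {set V * T}) (u v : V) : nat := Lw u v (Tin C u :&: Tin C v).

Definition EJM (C : {set V * T}) (u v : V) : R :=
  (deg u * deg v)%:R / (2 * mm) * (#|TC C|%:R / #|T|%:R)
  * (if (0 < #|Tin C u| * #|Tin C v|)%N then 1 else 0).
Definition EMM (C : {set V * T}) (u v : V) : R :=
  (deg u * deg v)%:R / (2 * mm)
  * (Num.sqrt ((#|Tin C u| * #|Tin C v|)%:R) / #|T|%:R).

Definition eta (Cs : {set {set V * T}}) (u : V) : R :=
  #|[set C in Cs | [exists t, (u, t) \in C]]|%:R - 1.

Definition LQ (Exp : {set V * T} -> V -> V -> R) (Cs : {set {set V * T}})
  (omega : R) : R :=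
  (2 * mm)^-1 * (\sum_(C in Cs) \sum_(u : V) \sum_(v : V) ((Lin C u v)%:R - Exp C u v))
  - omega / (2 * mm) * \sum_(u : V) eta Cs u.

Definition QJM := LQ EJM.
Definition QMM := LQ EMM.

Definition active (u : V) (t : T) : bool := [exists v, E t u v].

(* trimmed existence time of u in C:
   T_{u in C} /\ [min T_{u in C cap A}, max T_{u in C cap A}] *)
Definition trimT (C : {set V * T}) (u : V) : {set T} :=
  [set t in Tin C u | [exists a : T, exists b : T,
     [&& (u, a) \in C, active u a, (u, b) \in C, active u b,
         (a <= t)%O & (t <= b)%O]]].

Definition trim (C : {set V * T}) : {set V * T} := [set p | p.2 \in trimT C p.1].
Definition trimCS (Cs : {set {set V * T}}) : {set {set V * T}} :=
  [set trim C | C in Cs].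

Definition is_dcs (Cs : {set {set V * T}}) : bool :=
  (set0 \notin Cs) && trivIset Cs.

End LinkStream.

From Pilot Require Import Defs.
From HB Require Import structures.
From mathcomp Require Import all_boot all_order all_algebra.
From mathcomp Require Import reals.
Import Order.TTheory GRing.Theory Num.Theory.
Local Open Scope ring_scope.

(* Trimming only removes inactive time nodes, and an interaction at time t
   makes both of its endpoints active, so every observed count L_{uv in C}
   is unchanged.  Both null models are monotone in the existence times, so
   the expected counts can only decrease, and so can the number of
   communities each node visits.  Since communities are disjoint, two of them
   can only be merged by trimming when both become empty; such communities
   observe no interaction at all, hence had a nonpositive contribution. *)

Section Trimming.
Variables (d : Order.disp_t) (T : finOrderType d) (V : finType).
Variable E : T -> rel V.
Implicit Types (C : {set V * T}) (Cs : {set {set V * T}}).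

Lemma Tin_trim C u : Tin (trim E C) u = trimT E C u.
Proof. by apply/setP => t; rewrite !inE. Qed.

Lemma trimT_subset C u : trimT E C u \subset Tin C u.
Proof. by apply/subsetP => t; rewrite inE => /andP[]. Qed.

Lemma trim_subset C : trim E C \subset C.
Proof.
apply/subsetP => -[u t]; rewrite inE => /(subsetP (trimT_subset C u)).
by rewrite inE.
Qed.

Lemma mem_trimT_active C u t :
  active E u t -> (t \in trimT E C u) = (t \in Tin C u).
Proof.
move=> Aut; apply/idP/idP; first exact: (subsetP (trimT_subset C u)).
rewrite !inE => Cut; rewrite Cut /=.
by apply/existsP; exists t; apply/existsP; exists t; rewrite Cut Aut le_refl.
Qed.

Lemma Tin_subset C' C u : C' \subset C -> Tin C' u \subset Tin C u.
Proof. by move=> sC'C; apply/subsetP => t; rewrite !inE => /(subsetP sC'C). Qed.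

Lemma TC_subset C' C : C' \subset C -> TC C' \subset TC C.
Proof.
move=> sC'C; apply/subsetP => t; rewrite !inE => /existsP[u Cut].
by apply/existsP; exists u; apply: (subsetP sC'C).
Qed.

Lemma Tin_set0 u : Tin (set0 : {set V * T}) u = set0.
Proof. by apply/setP => t; rewrite !inE. Qed.

Lemma Lin_set0 u v : Lin E set0 u v = 0%N.
Proof. by rewrite /Lin /Lw !Tin_set0 setI0 big_set0. Qed.

Lemma trivIset_trim_inj Cs C1 C2 :
  trivIset Cs -> C1 \in Cs -> C2 \in Cs ->
  trim E C1 = trim E C2 -> trim E C1 != set0 -> C1 = C2.
Proof.
move=> /trivIsetP triv C1in C2in eq12 /set0Pn[p p1]; apply/eqP/negPn/negP => neq.
have /disjoint_setI0 disj := triv C1 C2 C1in C2in neq.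
have : p \in C1 :&: C2.
  by rewrite inE (subsetP (trim_subset C1)) // (subsetP (trim_subset C2)) -?eq12.
by rewrite disj inE.
Qed.

Lemma eta_trimCS (R : realType) Cs u :
  Defs.eta R (trimCS E Cs) u <= Defs.eta R Cs u.
Proof.
rewrite /Defs.eta lerB // ler_nat.
apply: leq_trans (leq_imset_card (trim E) _); apply: subset_leq_card.
apply/subsetP => C'; rewrite inE => /andP[/imsetP[C Cin ->] /existsP[t Ct]].
apply/imsetP; exists C => //; rewrite inE Cin; apply/existsP; exists t.
exact: (subsetP (trim_subset C)).
Qed.

Hypothesis Esym : forall t, symmetric (E t).

Lemma Lin_trim C u v : Lin E (trim E C) u v = Lin E C u v.
Proof.
rewrite /Lin /Lw !Tin_trim [LHS]big_mkcond [RHS]big_mkcond /=.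
apply: eq_bigr => t _; case Euv: (E t u v); last by do 2!case: ifP.
have Au : active E u t by apply/existsP; exists v.
have Av : active E v t by apply/existsP; exists u; rewrite Esym.
by rewrite !in_setI !mem_trimT_active.
Qed.

End Trimming.

Section NullModels.
Variables (R : realType) (d : Order.disp_t) (T : finOrderType d) (V : finType).
Variable E : T -> rel V.
Hypothesis hm : 0 < mm R E.
Implicit Types (C : {set V * T}).

Lemma degree_coef_ge0 (n : nat) : 0 <= n%:R / (2 * mm R E).
Proof. by rewrite divr_ge0 // mulr_ge0 // ltW. Qed.

Lemma EJM_subset C' C u v : C' \subset C -> EJM R E C' u v <= EJM R E C u v.
Proof.
move=> sC'C; rewrite /EJM; apply: ler_pM.
- by rewrite mulr_ge0 ?degree_coef_ge0 ?divr_ge0.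
- by case: ifP.
- rewrite ler_wpM2l ?degree_coef_ge0 // ler_wpM2r ?invr_ge0 // ler_nat.
  exact/subset_leq_card/TC_subset.
- case: ifP => [pos|]; last by case: ifP.
  by rewrite ifT // (leq_trans pos) // leq_mul ?subset_leq_card ?Tin_subset.
Qed.

Lemma EMM_subset C' C u v : C' \subset C -> EMM R E C' u v <= EMM R E C u v.
Proof.
move=> sC'C; rewrite /EMM ler_wpM2l ?degree_coef_ge0 // ler_wpM2r ?invr_ge0 //.
by rewrite ler_sqrt // ler_nat leq_mul ?subset_leq_card ?Tin_subset.
Qed.

Lemma EJM_set0 u v : EJM R E set0 u v = 0.
Proof. by rewrite /EJM !Tin_set0 cards0 mulr0. Qed.

Lemma EMM_set0 u v : EMM R E set0 u v = 0.
Proof. by rewrite /EMM !Tin_set0 cards0 sqrtr0 mul0r mulr0. Qed.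

End NullModels.

Section LongitudinalModularity.
Variables (R : realType) (d : Order.disp_t) (T : finOrderType d) (V : finType).
Variable E : T -> rel V.
Hypothesis Esym : forall t, symmetric (E t).
Variable Exp : {set V * T} -> V -> V -> R.
Hypothesis Exp_set0 : forall u v, Exp set0 u v = 0.
Hypothesis Exp_subset :
  forall (C' C : {set V * T}) u v, C' \subset C -> Exp C' u v <= Exp C u v.
Implicit Types (C : {set V * T}) (Cs : {set {set V * T}}).

Definition community_score C : R :=
  \sum_(u : V) \sum_(v : V) ((Lin E C u v)%:R - Exp C u v).

Lemma community_score_trim C : community_score C <= community_score (trim E C).
Proof.
apply: ler_sum => u _; apply: ler_sum => v _.
by rewrite Lin_trim // lerB // Exp_subset // trim_subset.
Qed.

Lemma community_score_set0 : community_score set0 = 0.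
Proof.
by apply: big1 => u _; apply: big1 => v _; rewrite Lin_set0 Exp_set0 subrr.
Qed.

Lemma community_score_trim_set0 C : trim E C = set0 -> community_score C <= 0.
Proof.
move=> C0; apply: sumr_le0 => u _; apply: sumr_le0 => v _.
by rewrite -Lin_trim // C0 Lin_set0 sub0r oppr_le0 -(Exp_set0 u v) Exp_subset ?sub0set.
Qed.

Lemma sum_community_score_trimCS Cs : trivIset Cs ->
  \sum_(C in Cs) community_score C <= \sum_(C in trimCS E Cs) community_score C.
Proof.
move=> triv; rewrite /trimCS (partition_big_imset (trim E)) /=.
apply: ler_sum => _ /imsetP[C0 C0in ->].
have [trim0|trim_neq0] := eqVneq (trim E C0) set0.
  rewrite trim0 community_score_set0; apply: sumr_le0 => C /andP[_ /eqP].
  exact: community_score_trim_set0.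
rewrite (big_pred1 C0) ?community_score_trim // => C /=.
apply/andP/eqP => [[Cin /eqP eqC]|->]; last by rewrite C0in.
by rewrite -eqC in trim_neq0; apply: trivIset_trim_inj triv Cin C0in eqC trim_neq0.
Qed.

Lemma LQ_trimCS Cs omega : 0 < mm R E -> trivIset Cs -> 0 <= omega ->
  LQ E Exp Cs omega <= LQ E Exp (trimCS E Cs) omega.
Proof.
move=> hm triv omega_ge0; have m2_ge0 : 0 <= 2 * mm R E by rewrite mulr_ge0 ?ltW.
rewrite /LQ lerB //.
  by rewrite ler_wpM2l ?invr_ge0 ?sum_community_score_trimCS.
by rewrite ler_wpM2l ?divr_ge0 // ler_sum // => u _; rewrite eta_trimCS.
Qed.

End LongitudinalModularity.

Theorem mainTheorem1 (R : realType) (d : Order.disp_t) (T : finOrderType d)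
  (V : finType) (E : T -> rel V)
  (Esym : forall t, symmetric (E t)) (Eirr : forall t, irreflexive (E t))
  (Cs : {set {set V * T}}) (omega : R)
  (hm : 0 < mm R E) (hCs : is_dcs Cs) (homega : 0 < omega) :
  QJM E (trimCS E Cs) omega >= QJM E Cs omega /\
  QMM E (trimCS E Cs) omega >= QMM E Cs omega.
Proof.
have /andP[_ triv] := hCs; have omega_ge0 := ltW homega.
split; apply: LQ_trimCS => //.
- exact: EJM_set0.
- by move=> *; apply: EJM_subset.
- exact: EMM_set0.
- by move=> *; apply: EMM_subset.
Qed.
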